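(* Let $\mathcal{C}^1, \mathcal{C}^2 \subset \mathbb{R}^l$, $p^1, p^2$, $p = p^2 - p^1 \neq 0$, $\mathcal{C} = \mathcal{C}^1 - \mathcal{C}^2 + \{p\}$, and the iterates $\beta^l_k$, $M^{i*}_k$, $(\nu^*_m)$, $z_m, z^1_m, z^2_m$, $\lambda_k$ of the growth distance algorithm be as described in the context. Then for every iteration $k \geq 0$ executed by the algorithm, the following hold: (i) (Primal feasibility) With $\beta = \beta^l_k$, $z = \sum_{m \in M^{i*}_k} \beta \nu^*_m z_m$, $\alpha = 1/\beta$, and $z^i = \sum_{m \in M^{i*}_k} \beta \nu^*_m z^i_m$ for $i \in \{1,2\}$, the pair $(\beta, z)$ is feasible for the ray intersection problem and the triple $(\alpha, z^1, z^2)$ is feasible for the growth distance problem. Moreover, $\beta > 0$ and $\alpha > 0$. (ii) (Dual feasibility) $\langle \lambda_k, z_{m_1}\rangle = \langle \lambda_k, z_{m_2}\rangle$ for all $m_1, m_2 \in M^{i*}_k$, and $\langle \lambda_k, p\rangle > 0$. (iii) (Simplex property) $\{z_m\}_{m \in M^{i*}_k} \subset \mathcal{C}$ is a linearly independent set (with $|M^{i*}_k| = l$).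
   Context: A proper convex (PC) set is a compact convex subset of $\mathbb{R}^l$ with nonempty interior. For a compact convex $\mathcal{C}$, $B_r(x)$ is the closed Euclidean ball, the inradius is $r(\mathcal{C}, x) = \max\{r \ge 0 : B_r(x) \subset \mathcal{C}\}$, the support function is $s_v[\mathcal{C}](\lambda) = \max_{z \in \mathcal{C}} \langle \lambda, z\rangle$, and a support point function $s_p[\mathcal{C}]$ is any selection $s_p[\mathcal{C}](\lambda) \in \arg\max_{z \in \mathcal{C}} \langle \lambda, z\rangle$ (arbitrary selection allowed). Setting: $\mathcal{C}^1$ is a PC set, $\mathcal{C}^2 \neq \emptyset$ is compact convex, $p^1 \in \operatorname{int}\mathcal{C}^1$, $p^2 \in \mathcal{C}^2$, $p^1 \neq p^2$, $r^i = r(\mathcal{C}^i, p^i)$ are known, and $\underline{r} = r^1 + r^2 > 0$. Let $p = p^2 - p^1$ and $\mathcal{C} = \mathcal{C}^1 - \mathcal{C}^2 + \{p\} = \{z^1 - z^2 + p: z^i \in \mathcal{C}^i\}$; then $B_{\underline r}(0) \subset \mathcal{C}$. Support values/points of $\mathcal{C}$ are computed as $s_v[\mathcal{C}](\lambda) = s_v[\mathcal{C}^1](\lambda) + s_v[\mathcal{C}^2](-\lambda) + \langle \lambda, p\rangle$ and $s_p[\mathcal{C}](\lambda) = s_p[\mathcal{C}^1](\lambda) - s_p[\mathcal{C}^2](-\lambda) + p$. Growth distance problem: minimize $\alpha$ over $\alpha \ge 0$, $z^1 \in \mathcal{C}^1$, $z^2 \in \mathcal{C}^2$ subject to $\alpha(z^1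 - p^1) + p^1 = \alpha(z^2 - p^2) + p^2$. Ray intersection problem: maximize $\beta$ over $(\beta, z)$ subject to $z \in \mathcal{C}$, $z = \beta p$. Algorithm. Initialization ($k=0$): $M^o_0 = \emptyset$, $\beta^u_0 = \infty$; $M^i_0 = \{-l+1, \dots, 0\}$; choose $l-1$ linearly independent unit vectors $p^\perp_m$ ($m = -l+1, \dots, -1$) orthogonal to $p$, and set $z_m = K p^\perp_m + \epsilon p/\|p\|$ for $m = -l+1,\dots,-1$ and $z_0 = l\epsilon p/\|p\| - \sum_{m=-l+1}^{-1} z_m$, where $\epsilon > 0$, $K > 0$ are such that $\|z_m\| \le \underline r$ for all $m \in M^i_0$; for each such $m$ fix some $z^1_m \in \mathcal{C}^1$, $z^2_m \in \mathcal{C}^2$ with $z_m = z^1_m - z^2_m + p$. Set $M^{i*}_0 = M^i_0$, $\beta^l_0 = \epsilon/\|p\|$, the basic values $\nu^*_m = \|p\|/(l\epsilon)$ for $m \in M^{i*}_0$, and $\lambda_0 = p/\|p\|_\infty$. Iteration $k \ge 1$: compute $z^1_k = s_p[\mathcal{C}^1](\lambda_{k-1})$, $z^2_k = s_p[\mathcal{C}^2](-\lambda_{k-1})$, $z_k = z^1_k - z^2_k + p$, $v_k = s_v[\mathcal{C}](\lambda_{k-1})$. Outer update: $M^o_k = \{m^*\}$ with $m^* \in \arg\min_{m \in M^o_{k-1} \cup \{k\}} v_m/\langle \lambda_{m-1}, p\rangle$ and $\beta^u_k = \min\{\beta^u_{k-1}, v_k/\langle \lambda_{k-1}, p\rangle\}$.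 Inner update: set $M^i_k = M^i_{k-1} \cup \{k\}$ and solve the linear program $\min \sum_{m \in M^i_k} \nu_m$ subject to $\sum_{m \in M^i_k} \nu_m z_m = p$, $\nu \ge 0$, by the primal Simplex method started from the basis $M^{i*}_{k-1}$ (entering index chosen with most negative reduced cost, leaving index by the minimum-ratio test, with Bland's anti-cycling rule), giving an optimal basis $M^{i*}_k \subset M^i_k$ and basic optimal solution $(\nu^*_m)$ (with $\nu^*_m = 0$ off the basis); set $\beta^l_k = (\sum_m \nu^*_m)^{-1}$. Then $M^i_k$ may be pruned to any subset still containing $M^{i*}_k$. Set $\lambda_k = Z^{-\top}\mathbf{1}$ where $Z = [z_{m_1} \cdots z_{m_l}]$, $\{m_1,\dots,m_l\} = M^{i*}_k$, and then normalize $\lambda_k \leftarrow \lambda_k/\|\lambda_k\|_\infty$. The algorithm stops when $\beta^u_k/\beta^l_k - 1 < \epsilon_{tol}$ or $k = K_{max}$. *)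

From HB Require Import structures.
From mathcomp Require Import all_boot all_order all_algebra.
From mathcomp Require Import all_classical all_reals all_analysis.
Set Implicit Arguments. Unset Strict Implicit. Unset Printing Implicit Defensive.
Import Order.TTheory GRing.Theory Num.Theory.
Import numFieldNormedType.Exports.
Local Open Scope classical_set_scope.
Local Open Scope ring_scope.

Section GD.
Variables (R : realType) (l : nat).
Notation vec := 'rV[R]_l.

Definition dot (u v : vec) : R := \sum_(i < l) u ord0 i * v ord0 i.
Definition enorm (u : vec) : R := Num.sqrt (dot u u).
Definition infnorm (u : vec) : R := \big[Num.max/0]_(i < l) `|u ord0 i|.

Definition PC_set (C : set vec) : Prop :=
  compact C /\ convex.convex_set C /\ (interior C !=set0).

Definition cball (x : vec) (r : R) : set vec := [set y | enorm (y - x) <= r].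

Definition is_inradius (C : set vec) (x : vec) (r : R) : Prop :=
  0 <= r /\ cball x r `<=` C /\
  (forall r', 0 <= r' -> cball x r' `<=` C -> r' <= r).

Definition mdiff (C1 C2 : set vec) (p : vec) : set vec :=
  [set y | exists z1 z2, C1 z1 /\ C2 z2 /\ y = z1 - z2 + p].

Definition is_support_point (C : set vec) (lam z : vec) : Prop :=
  C z /\ forall y, C y -> dot lam y <= dot lam z.

Definition lin_indep (s : seq int) (v : int -> vec) : Prop :=
  forall c : int -> R, \sum_(m <- s) c m *: v m = 0 -> forall m, m \in s -> c m = 0.

Definition rip_feasible (C : set vec) (p : vec) (beta : R) (z : vec) : Prop :=
  C z /\ z = beta *: p.
Definition gd_feasible (C1 C2 : set vec) (p1 p2 : vec) (alpha : R) (z1 z2 : vec) : Prop :=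
  0 <= alpha /\ C1 z1 /\ C2 z2 /\
  alpha *: (z1 - p1) + p1 = alpha *: (z2 - p2) + p2.

(* ---------- Simplex method for  min sum nu  s.t.  sum nu_m z_m = p, nu >= 0 ---------- *)
Definition basis_mx (z : int -> vec) (B : seq int) : 'M[R]_l :=
  \matrix_(i < l, j < l) z (nth 0 B j) ord0 i.
Definition basic_sol (z : int -> vec) (B : seq int) (p : vec) : 'cV[R]_l :=
  invmx (basis_mx z B) *m p^T.
Definition dual_vec (z : int -> vec) (B : seq int) : vec :=
  (invmx (basis_mx z B)^T *m const_mx 1)^T.
(* reduced cost of column j (all costs equal to 1) *)
Definition redcost (z : int -> vec) (B : seq int) (j : int) : R :=
  1 - dot (dual_vec z B) (z j).
Definition sdir (z : int -> vec) (B : seq int) (j : int) : 'cV[R]_l :=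
  invmx (basis_mx z B) *m (z j)^T.

(* one primal Simplex pivot on the column set A: entering index with most
   negative reduced cost, leaving index by the minimum-ratio test, ties broken
   by smallest index (Bland) *)
Definition pivot (z : int -> vec) (p : vec) (A : seq int) (B B' : seq int) : Prop :=
  exists (j : int) (r : 'I_l),
    [/\ j \in A /\ j \notin B, redcost z B j < 0,
     (forall j', j' \in A -> j' \notin B ->
        redcost z B j <= redcost z B j' /\
        (redcost z B j' = redcost z B j -> (j <= j')%R)),
     0 < sdir z B j r ord0 /\
     (forall s : 'I_l, 0 < sdir z B j s ord0 ->
        basic_sol z B p r ord0 / sdir z B j r ord0
          <= basic_sol z B p s ord0 / sdir z B j s ord0 /\
        (basic_sol z B p s ord0 / sdir z B j s ord0
           = basic_sol z B p r ord0 / sdir z B j r ord0 ->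
         (nth 0 B r <= nth 0 B s)%R))
     & B' = set_nth 0 B r j].

Definition simplex_optimal (z : int -> vec) (A B : seq int) : Prop :=
  forall j, j \in A -> 0 <= redcost z B j.

Inductive simplex_run (z : int -> vec) (p : vec) (A : seq int) :
    seq int -> seq int -> Prop :=
  | srun_stop B : simplex_optimal z A B -> simplex_run z p A B B
  | srun_step B B' Bf : pivot z p A B B' -> simplex_run z p A B' Bf ->
                        simplex_run z p A B Bf.

Definition perp_idx : seq int := [seq - (Posz i.+1) | i <- iota 0 l.-1].
Definition init_idx : seq int := 0 :: perp_idx.

(* The data of a run up to iteration k.  zz1 m, zz2 m are z^1_m, z^2_m, and
   z_m := z^1_m - z^2_m + p; lam j = lambda_j, Mi j = M^i_j (after pruning),
   B j = M^{i*}_j (ordered), nu j m = nu^*_m at iteration j. *)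
Definition gd_run (C1 C2 : set vec) (p1 p2 : vec) (rbar eps K : R)
    (pperp : int -> vec) (zz1 zz2 : int -> vec) (lam : nat -> vec)
    (Mi B : nat -> seq int) (nu : nat -> int -> R) (k : nat) : Prop :=
  let p := p2 - p1 in
  let z := fun m => zz1 m - zz2 m + p in
  [/\ (0 < eps /\ 0 < K) /\
      (forall m, m \in perp_idx -> enorm (pperp m) = 1 /\ dot (pperp m) p = 0)
        /\ lin_indep perp_idx pperp,
      (forall m, m \in perp_idx -> z m = K *: pperp m + (eps / enorm p) *: p)
        /\ z 0 = ((l%:R * eps) / enorm p) *: p - \sum_(m <- perp_idx) z m,
      (forall m, m \in init_idx -> enorm (z m) <= rbar /\ C1 (zz1 m) /\ C2 (zz2 m)),
      [/\ Mi 0%N = init_idx, B 0%N = init_idx,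
          (forall m, nu 0%N m = if m \in init_idx then enorm p / (l%:R * eps) else 0)
        & lam 0%N = (infnorm p)^-1 *: p]
    &
      forall j : nat, (0 < j <= k)%N ->
      let A := rcons (Mi j.-1) (Posz j) in
      [/\ is_support_point C1 (lam j.-1) (zz1 (Posz j)),
          is_support_point C2 (- lam j.-1) (zz2 (Posz j)),
          simplex_run z p A (B j.-1) (B j),
          ((forall i : 'I_l, nu j (nth 0 (B j) i) = basic_sol z (B j) p i ord0)
            /\ (forall m, m \notin B j -> nu j m = 0)) /\
          ({subset B j <= Mi j} /\ {subset Mi j <= A})
        & lam j = (infnorm (dual_vec z (B j)))^-1 *: dual_vec z (B j)]].

End GD.

(* Every basis B visited by the algorithm is feasible for the linear program
   min sum nu  s.t.  Z nu = p, nu >= 0: its matrix Z_B is invertible and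
   Z_B^-1 p >= 0.  The initial columns are eps/|p| p + K pperp_m and
   eps/|p| p - K sum_m pperp_m, which are independent because the pperp_m are
   independent and orthogonal to p.  A Simplex pivot multiplies Z_B by an eta
   matrix with positive pivot entry, and the minimum-ratio test keeps the new
   basic solution nonnegative.
   For a feasible basis, nu* >= 0, sum nu*_m z_m = p and sum nu* > 0 as p <> 0,
   so the beta nu*_m are convex weights: the corresponding combinations of the
   z^i_m lie in C^i and that of the z_m is beta p, which gives (i) with
   alpha = 1/beta.  Each lambda_k is a positive multiple of Z_B^-T 1, whose inner
   product is 1 with every column of Z_B and sum nu* > 0 with p; this gives (ii)
   (for k = 0, lambda_0 = p/|p|_oo while Z_B^-T 1 = p/(eps |p|)).  Finally (iii)
   is the invertibility of Z_B. *)

From HB Require Import structures.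
From mathcomp Require Import all_boot all_order all_algebra.
From mathcomp Require Import all_classical all_reals all_analysis.
From mathcomp Require Import ring lra.
Import Order.TTheory GRing.Theory Num.Theory.
Import numFieldNormedType.Exports.
Local Open Scope classical_set_scope.
Local Open Scope ring_scope.
Set Implicit Arguments. Unset Strict Implicit. Unset Printing Implicit Defensive.

Section ConvexCombination.
Variables (R : realFieldType) (M : lmodType R).

Lemma convex_set_conv (A : set M) (x y : M) (t : R) :
  convex.convex_set A -> 0 <= t -> t <= 1 -> A x -> A y ->
  A (t *: x + (1 - t) *: y).
Proof.
move=> cA t0 t1 Ax Ay.
by have := cA x y (Itv01 t0 t1) (mem_set Ax) (mem_set Ay); rewrite inE.
Qed.

Lemma convex_set_sum (I : eqType) (A : set M) (s : seq I) (w : I -> R) (v : I -> M) :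
  convex.convex_set A -> (forall i, i \in s -> 0 <= w i) ->
  \sum_(i <- s) w i = 1 -> (forall i, i \in s -> A (v i)) ->
  A (\sum_(i <- s) w i *: v i).
Proof.
move=> cA; elim: s w => [|a s IH] w w_ge0.
  by rewrite big_nil => /esym/eqP; rewrite oner_eq0.
rewrite !big_cons => sum_w Av.
have ws_ge0 i : i \in s -> 0 <= w i by move=> si; apply: w_ge0; rewrite in_cons si orbT.
have As i : i \in s -> A (v i) by move=> si; apply: Av; rewrite in_cons si orbT.
set T := \sum_(i <- s) w i in sum_w.
have [T0|T_neq0] := eqVneq T 0.
  have ws0 i : i \in s -> w i = 0.
    move=> si; move/eqP: T0; rewrite /T big_seq psumr_eq0 //.
    by move=> /allP/(_ i si)/implyP/(_ si)/eqP.
  rewrite big_seq big1 => [|i /ws0 ->]; last by rewrite scale0r.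
  have wa1 : w a = 1 by rewrite -sum_w T0 addr0.
  by rewrite addr0 wa1 scale1r; apply: Av; rewrite mem_head.
have T_gt0 : 0 < T by rewrite lt_def T_neq0 /T big_seq sumr_ge0.
have -> : \sum_(i <- s) w i *: v i = (1 - w a) *: \sum_(i <- s) (w i / T) *: v i.
  rewrite -sum_w addrC addKr scaler_sumr; apply: eq_bigr => i _.
  by rewrite scalerA mulrCA divff ?mulr1.
apply: convex_set_conv => //.
- by apply: w_ge0; rewrite mem_head.
- by rewrite -sum_w lerDl ltW.
- by apply: Av; rewrite mem_head.
apply: IH => [i si||].
- by rewrite divr_ge0 ?ws_ge0 ?ltW.
- by rewrite -mulr_suml divff.
- exact: As.
Qed.

End ConvexCombination.

Section DotProduct.
Variables (R : realType) (l : nat).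
Implicit Types (u v w : 'rV[R]_l).

Lemma dotC u v : dot u v = dot v u.
Proof. by apply: eq_bigr => i _; rewrite mulrC. Qed.

Lemma dotDr u v w : dot u (v + w) = dot u v + dot u w.
Proof. by rewrite /dot -big_split; apply: eq_bigr => i _; rewrite mxE mulrDr. Qed.

Lemma dotZr u v a : dot u (a *: v) = a * dot u v.
Proof. by rewrite /dot mulr_sumr; apply: eq_bigr => i _; rewrite mxE mulrCA. Qed.

Lemma dotZl u v a : dot (a *: u) v = a * dot u v.
Proof. by rewrite dotC dotZr dotC. Qed.

Lemma dot0r u : dot u 0 = 0.
Proof. by rewrite -(scale0r 0) dotZr mul0r. Qed.

Lemma dot_sumr (I : Type) (s : seq I) (F : I -> 'rV[R]_l) u :
  dot u (\sum_(i <- s) F i) = \sum_(i <- s) dot u (F i).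
Proof.
elim: s => [|a s IH]; last by rewrite !big_cons dotDr IH.
by rewrite !big_nil dot0r.
Qed.

Lemma dot_self_gt0 u : u != 0 -> 0 < dot u u.
Proof.
move=> u_neq0; have dot_ge0 i : true -> 0 <= u 0 i * u 0 i by rewrite -expr2 sqr_ge0.
rewrite lt_def sumr_ge0 // andbT; apply: contraNneq u_neq0 => uu0.
apply/eqP/rowP => i; rewrite mxE; apply/eqP.
by have := psumr_eq0P dot_ge0 uu0 (i := i) isT; move/eqP; rewrite mulf_eq0 orbb.
Qed.

Lemma enorm_gt0 u : u != 0 -> 0 < enorm u.
Proof. by move=> u_neq0; rewrite sqrtr_gt0 dot_self_gt0. Qed.

Lemma sqr_enorm u : enorm u ^+ 2 = dot u u.
Proof. by rewrite sqr_sqrtr // sumr_ge0 // => i _; rewrite -expr2 sqr_ge0. Qed.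

Lemma infnorm_gt0 u : u != 0 -> 0 < infnorm u.
Proof.
move=> u_neq0; have [i ui_neq0] : exists i, u 0 i != 0.
  apply/existsP; apply: contraNT u_neq0 => /existsPn ui0.
  by apply/eqP/rowP => i; rewrite mxE; apply/eqP/negPn.
by rewrite /infnorm (bigD1 i) //= lt_max normr_gt0 ui_neq0.
Qed.

Lemma lin_indep_orth_ext (s : seq int) (v : int -> 'rV[R]_l) p :
  p != 0 -> (forall m, m \in s -> dot (v m) p = 0) -> lin_indep s v ->
  forall (c : int -> R) t, \sum_(m <- s) c m *: v m + t *: p = 0 ->
  t = 0 /\ forall m, m \in s -> c m = 0.
Proof.
move=> p_neq0 v_orth v_indep c t comb0.
have t0 : t = 0.
  have /eqP := congr1 (dot p) comb0.
  rewrite dotDr dot_sumr big_seq big1 => [|m ms]; last by rewrite dotZr dotC v_orth ?mulr0.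
  by rewrite add0r dotZr dot0r mulf_eq0 (gt_eqF (dot_self_gt0 p_neq0)) orbF => /eqP.
by split=> //; apply: v_indep; apply: etrans comb0; rewrite t0 scale0r addr0.
Qed.

End DotProduct.

Lemma inj_unitmx (F : fieldType) (n : nat) (A : 'M[F]_n) :
  (forall c : 'cV[F]_n, A *m c = 0 -> c = 0) -> A \in unitmx.
Proof.
move=> A_inj; rewrite -unitmx_tr -row_free_unit -kermx_eq0.
apply/eqP/row_matrixP => i; rewrite row0; apply: trmx_inj; rewrite trmx0.
apply: A_inj; have : row i (kermx A^T) *m A^T = 0 by rewrite -row_mul mulmx_ker row0.
by move/(congr1 trmx); rewrite trmx_mul trmxK trmx0.
Qed.

Section EtaMatrix.
Variables (F : fieldType) (n : nat) (r : 'I_n) (d : 'cV[F]_n).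

Definition eta_mx : 'M[F]_n := \matrix_(a, b) if b == r then d a 0 else (a == b)%:R.

Lemma mul_eta_mx (c : 'cV[F]_n) : eta_mx *m c = c + c r 0 *: (d - delta_mx r 0).
Proof.
apply/colP => a; rewrite !mxE (bigD1 r) //= !mxE eqxx.
have [->|a_neq_r] := eqVneq a r.
  rewrite big1 => [|b b_neq_r]; last first.
    by rewrite !mxE (negbTE b_neq_r) eq_sym (negbTE b_neq_r) mul0r.
  by rewrite !eqxx /=; ring.
rewrite (bigD1 a) //= big1 => [|b /andP [b_neq_r b_neq_a]]; last first.
  by rewrite !mxE (negbTE b_neq_r) eq_sym (negbTE b_neq_a) mul0r.
by rewrite !mxE eqxx (negbTE a_neq_r) /=; ring.
Qed.

Lemma mulmx_eta (A : 'M[F]_n) :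
  A *m eta_mx = \matrix_(a, b) if b == r then (A *m d) a 0 else A a b.
Proof.
apply/matrixP => a b; rewrite !mxE; case: eqP => [->|/eqP b_neq_r].
  by apply: eq_bigr => c _; rewrite !mxE eqxx.
rewrite -{2}[A](mulmx1 A) mxE; apply: eq_bigr => c _.
by rewrite !mxE (negbTE b_neq_r).
Qed.

Lemma eta_mx_unit : d r 0 != 0 -> eta_mx \in unitmx.
Proof.
move=> dr_neq0; apply: inj_unitmx => c; rewrite mul_eta_mx => Ec0.
have cr0 : c r 0 = 0.
  have /colP/(_ r) := Ec0; rewrite !mxE !eqxx /=.
  have -> : c r 0 + c r 0 * (d r 0 - 1) = c r 0 * d r 0 by ring.
  by move/eqP; rewrite mulf_eq0 (negbTE dr_neq0) orbF => /eqP.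
by move: Ec0; rewrite cr0 scale0r addr0.
Qed.

Lemma mul_eta_mx_pivot (x : 'cV[F]_n) : d r 0 != 0 ->
  eta_mx *m (x - (x r 0 / d r 0) *: (d - delta_mx r 0)) = x.
Proof.
move=> dr_neq0; rewrite mul_eta_mx !mxE !eqxx /=.
have -> : x r 0 - x r 0 / d r 0 * (d r 0 - 1) = x r 0 / d r 0 by field.
by rewrite subrK.
Qed.

End EtaMatrix.

Section BasisMatrix.
Variables (R : realType) (l : nat) (z : int -> 'rV[R]_l).
Implicit Types (B : seq int) (p : 'rV[R]_l).

Lemma big_basis (V : zmodType) B (F : int -> V) : size B = l ->
  \sum_(m <- B) F m = \sum_(i < l) F (nth 0 B i).
Proof. by move=> sB; rewrite (big_nth 0) sB big_mkord. Qed.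

Lemma mem_basisP B m : size B = l -> m \in B -> exists i : 'I_l, m = nth 0 B i.
Proof.
move=> sB mB; have mi : (index m B < l)%N by rewrite -sB index_mem.
by exists (Ordinal mi); rewrite nth_index.
Qed.

Lemma basis_mx_mulE B (c : 'cV[R]_l) :
  (basis_mx z B *m c)^T = \sum_(i < l) c i 0 *: z (nth 0 B i).
Proof.
by apply/rowP => a; rewrite !mxE summxE; apply: eq_bigr => i _; rewrite !mxE mulrC.
Qed.

Lemma row_mul_basis_mx B (w : 'rV[R]_l) (i : 'I_l) :
  (w *m basis_mx z B) 0 i = dot w (z (nth 0 B i)).
Proof. by rewrite mxE; apply: eq_bigr => a _; rewrite mxE. Qed.

Lemma basis_mx_unitP B : size B = l ->
  basis_mx z B \in unitmx <-> uniq B /\ lin_indep B z.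
Proof.
move=> sB; split=> [Z_unit|[B_uniq B_indep]].
  split.
    apply/negPn/negP => /(uniqPn 0) [i [k [ik]]]; rewrite sB => kl eq_ik.
    have ilt : (i < l)%N by apply: ltn_trans kl.
    move: Z_unit; rewrite unitmxE -det_tr.
    rewrite (@determinant_alternate _ _ _ (Ordinal ilt) (Ordinal kl)) ?unitr0 //.
      by rewrite -val_eqE /= ltn_eqF.
    by move=> a; rewrite !mxE /= eq_ik.
  move=> c sum0 m mB; pose cv : 'cV[R]_l := \col_i c (nth 0 B i).
  have Zcv0 : basis_mx z B *m cv = 0.
    apply: trmx_inj; rewrite basis_mx_mulE trmx0; apply: etrans sum0.
    by rewrite (big_basis _ sB); apply: eq_bigr => i _; rewrite mxE.
  have cv0 : cv = 0 by rewrite -[cv](mulKmx Z_unit) Zcv0 mulmx0.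
  have [i ->] := mem_basisP sB mB.
  by have /matrixP/(_ i 0) := cv0; rewrite !mxE.
apply: inj_unitmx => c Zc0.
pose f (m : int) := \sum_(i < l | nth 0 B i == m) c i 0.
have fE (k : 'I_l) : f (nth 0 B k) = c k 0.
  rewrite /f (eq_bigl (pred1 k)) ?big_pred1_eq // => i /=.
  by rewrite nth_uniq ?sB.
have f0 : forall m, m \in B -> f m = 0.
  apply: B_indep; rewrite (big_basis _ sB).
  under eq_bigr => k _ do rewrite fE.
  by rewrite -basis_mx_mulE Zc0 trmx0.
by apply/matrixP => k j; rewrite [j]ord1 mxE -fE f0 // mem_nth // sB.
Qed.

Section UnitBasis.
Variables (B : seq int) (p : 'rV[R]_l).
Hypothesis Z_unit : basis_mx z B \in unitmx.

Lemma basic_solP : basis_mx z B *m basic_sol z B p = p^T.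
Proof. by rewrite /basic_sol mulKVmx. Qed.

Lemma basic_sol_unique (x : 'cV[R]_l) : basis_mx z B *m x = p^T -> basic_sol z B p = x.
Proof. by move=> Zx; rewrite /basic_sol -Zx mulKmx. Qed.

Lemma sum_basic_sol : \sum_(i < l) basic_sol z B p i 0 *: z (nth 0 B i) = p.
Proof. by rewrite -basis_mx_mulE basic_solP trmxK. Qed.

Lemma dual_vec_mul : dual_vec z B *m basis_mx z B = const_mx 1.
Proof.
rewrite /dual_vec trmx_mul trmx_inv trmxK mulmxKV //.
by apply/matrixP => i j; rewrite !mxE.
Qed.

Lemma dot_dual_vec_basis (i : 'I_l) : dot (dual_vec z B) (z (nth 0 B i)) = 1.
Proof. by rewrite -row_mul_basis_mx dual_vec_mul mxE. Qed.

Lemma dual_vec_unique w : (forall i : 'I_l, dot w (z (nth 0 B i)) = 1) -> dual_vec z B = w.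
Proof.
move=> w_basis; have wZ : w *m basis_mx z B = const_mx 1.
  by apply/rowP => i; rewrite row_mul_basis_mx w_basis mxE.
by rewrite -[w](mulmxK Z_unit) wZ -dual_vec_mul mulmxK.
Qed.

Lemma dot_dual_vec : dot (dual_vec z B) p = \sum_(i < l) basic_sol z B p i 0.
Proof.
rewrite -{1}sum_basic_sol dot_sumr; apply: eq_bigr => i _.
by rewrite dotZr dot_dual_vec_basis mulr1.
Qed.

End UnitBasis.

End BasisMatrix.

Lemma ratio_test_ge0 (R : realFieldType) (I : Type) (x d : I -> R) (r : I) :
  (forall a, 0 <= x a) -> 0 < d r -> (forall a, 0 < d a -> x r / d r <= x a / d a) ->
  forall a, 0 <= x a - x r / d r * d a.
Proof.
move=> x_ge0 dr_gt0 ratio a; rewrite subr_ge0.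
have [da_gt0|da_le0] := ltP 0 (d a); first by rewrite -ler_pdivlMr ?ratio.
have : 0 <= x r / d r by rewrite divr_ge0 ?x_ge0 ?ltW.
by have := x_ge0 a; nra.
Qed.

Section Simplex.
Variables (R : realType) (l : nat) (z : int -> 'rV[R]_l) (p : 'rV[R]_l).

Definition feasible_basis (B : seq int) : Prop :=
  [/\ size B = l, basis_mx z B \in unitmx & forall i, 0 <= basic_sol z B p i 0].

Lemma basis_mx_set_nth B (r : 'I_l) j :
  basis_mx z B \in unitmx ->
  basis_mx z (set_nth 0 B r j) = basis_mx z B *m eta_mx r (sdir z B j).
Proof.
move=> Z_unit; rewrite mulmx_eta /sdir mulKVmx //.
apply/matrixP => a b; rewrite !mxE nth_set_nth /= -[(b : nat) == r]/(b == r).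
by case: (b == r).
Qed.

Lemma pivot_feasible A B B' : feasible_basis B -> pivot z p A B B' -> feasible_basis B'.
Proof.
case=> sB Z_unit x_ge0 [j [r [_ _ _ [dr_gt0 ratio] ->]]].
set d := sdir z B j in dr_gt0 ratio *; set x := basic_sol z B p in x_ge0 ratio *.
set t := x r 0 / d r 0.
have Z'E : basis_mx z (set_nth 0 B r j) = basis_mx z B *m eta_mx r d.
  exact: basis_mx_set_nth.
have Z'_unit : basis_mx z (set_nth 0 B r j) \in unitmx.
  by rewrite Z'E unitmx_mul Z_unit eta_mx_unit ?gt_eqF.
have x'E : basic_sol z (set_nth 0 B r j) p = x - t *: (d - delta_mx r 0).
  apply: basic_sol_unique => //.
  by rewrite Z'E -mulmxA mul_eta_mx_pivot ?basic_solP ?gt_eqF.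
split=> [||a].
- by rewrite size_set_nth sB; apply/maxn_idPr.
- exact: Z'_unit.
have t_ge0 : 0 <= t by rewrite /t divr_ge0 ?x_ge0 ?(ltW dr_gt0).
have := ratio_test_ge0 (x := fun a => x a 0) x_ge0 dr_gt0 (fun a da => (ratio a da).1) a.
rewrite x'E -/t; clearbody t x d; rewrite !mxE; case: (a == r) => /=; nra.
Qed.

Lemma simplex_run_feasible A B Bf :
  feasible_basis B -> simplex_run z p A B Bf -> feasible_basis Bf.
Proof.
move=> fB run; elim: run fB => // B1 B2 B3 piv _ IH fB1.
exact/IH/(pivot_feasible fB1 piv).
Qed.

Section FeasibleBasis.
Variable B : seq int.
Hypotheses (p_neq0 : p != 0) (B_feasible : feasible_basis B).

Lemma sum_basic_sol_gt0 : 0 < \sum_(i < l) basic_sol z B p i 0.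
Proof.
case: B_feasible => _ Z_unit x_ge0; rewrite lt_def sumr_ge0 // andbT.
apply: contraNneq p_neq0 => /psumr_eq0P x0.
by rewrite -(sum_basic_sol p Z_unit) big1 // => i _; rewrite x0 ?scale0r.
Qed.

Lemma feasible_basis_solution (nu : int -> R) :
    (forall i : 'I_l, nu (nth 0 B i) = basic_sol z B p i 0) ->
  [/\ forall m, m \in B -> 0 <= nu m,
      \sum_(m <- B) nu m *: z m = p & 0 < \sum_(m <- B) nu m].
Proof.
case: (B_feasible) => sB Z_unit x_ge0 nuE; split.
- by move=> m /(mem_basisP sB) [i ->]; rewrite nuE.
- rewrite -(sum_basic_sol p Z_unit) (big_basis _ sB).
  by apply: eq_bigr => i _; rewrite nuE.
- rewrite (big_basis _ sB) (eq_bigr _ (fun i _ => nuE i)).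
  exact: sum_basic_sol_gt0.
Qed.

Lemma feasible_basis_dual (lam : 'rV[R]_l) (c : R) :
  0 < c -> lam = c *: dual_vec z B ->
  (forall m1 m2, m1 \in B -> m2 \in B -> dot lam (z m1) = dot lam (z m2))
  /\ 0 < dot lam p.
Proof.
case: B_feasible => sB Z_unit _ c_gt0 ->; split.
  move=> _ _ /(mem_basisP sB) [i1 ->] /(mem_basisP sB) [i2 ->].
  by rewrite !dotZl !dot_dual_vec_basis.
by rewrite dotZl dot_dual_vec // mulr_gt0 ?sum_basic_sol_gt0.
Qed.

Lemma dual_vec_neq0 : dual_vec z B != 0.
Proof.
case: (B_feasible) => _ Z_unit _; apply/negP => /eqP dual0.
by have := sum_basic_sol_gt0; rewrite -dot_dual_vec // dual0 dotC dot0r ltxx.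
Qed.

End FeasibleBasis.

End Simplex.

Lemma rV_neq0_dim_gt0 (R : nmodType) (n : nat) (v : 'rV[R]_n) : v != 0 -> (0 < n)%N.
Proof. by case: n v => // v; rewrite thinmx0 eqxx. Qed.

Lemma perp_idx_neg (l : nat) m : m \in perp_idx l -> m < 0.
Proof. by case/mapP => i _ ->; rewrite oppr_lt0. Qed.

Lemma init_idx_uniq (l : nat) : uniq (init_idx l).
Proof.
rewrite /= map_inj_uniq ?iota_uniq ?andbT; last by move=> i j /oppr_inj [].
by apply/negP => /perp_idx_neg; rewrite ltxx.
Qed.

Lemma size_init_idx (l : nat) : (0 < l)%N -> size (init_idx l) = l.
Proof. by case: l => //= n _; rewrite size_map size_iota. Qed.

Section Initialization.
Variables (R : realType) (l : nat) (z pperp : int -> 'rV[R]_l) (p : 'rV[R]_l) (eps K : R).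
Hypotheses (p_neq0 : p != 0) (eps_gt0 : 0 < eps) (K_gt0 : 0 < K).
Hypotheses (pperp_orth : forall m, m \in perp_idx l -> dot (pperp m) p = 0)
           (pperp_indep : lin_indep (perp_idx l) pperp).
Hypotheses (z_perp : forall m, m \in perp_idx l ->
                      z m = K *: pperp m + (eps / enorm p) *: p)
           (z_0 : z 0 = ((l%:R * eps) / enorm p) *: p - \sum_(m <- perp_idx l) z m).

Let l_gt0 : (0 < l)%N := rV_neq0_dim_gt0 p_neq0.
Let enorm_p_gt0 : 0 < enorm p := enorm_gt0 p_neq0.

Lemma sum_init_idx : \sum_(m <- init_idx l) z m = ((l%:R * eps) / enorm p) *: p.
Proof. by rewrite big_cons z_0 subrK. Qed.

Lemma dot_init_idx m : m \in init_idx l -> dot p (z m) = eps * enorm p.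
Proof.
have dot_perp m' : m' \in perp_idx l -> dot p (z m') = eps * enorm p.
  move=> m'_perp; rewrite z_perp // dotDr !dotZr dotC pperp_orth // -sqr_enorm.
  by field; rewrite gt_eqF.
rewrite inE => /orP [/eqP ->|]; last exact: dot_perp.
rewrite z_0 dotDr dotZr -sqr_enorm -scaleN1r dotZr dot_sumr (eq_big_seq _ dot_perp).
rewrite big_const_seq count_predT iter_addr_0 size_map size_iota.
rewrite -[in l%:R](prednK l_gt0) -addn1 natrD.
by field; rewrite gt_eqF.
Qed.

Lemma init_idx_lin_indep : lin_indep (init_idx l) z.
Proof.
move=> c; rewrite big_cons z_0 scalerBr scaler_sumr addrAC -addrA -sumrB.
under eq_big_seq => m /z_perp -> do
  rewrite -scalerBl scalerDr !scalerA.
rewrite big_split /= -scaler_suml addrCA scalerA -scalerDl => comb0.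
have [coef0 perp0] := lin_indep_orth_ext p_neq0 pperp_orth pperp_indep comb0.
have c_perp m : m \in perp_idx l -> c m = c 0.
  by move=> /perp0/eqP; rewrite mulf_eq0 (gt_eqF K_gt0) orbF subr_eq0 => /eqP.
have c00 : c 0 = 0.
  move: coef0; rewrite -mulr_suml big_seq big1 => [|m /c_perp ->]; last by rewrite subrr.
  rewrite mul0r addr0 => /eqP; rewrite mulf_eq0 => /orP [/eqP //|].
  by rewrite gt_eqF // divr_gt0 ?mulr_gt0 ?ltr0n.
by move=> m; rewrite inE => /orP [/eqP -> //|/c_perp ->].
Qed.

Lemma init_idx_feasible :
  [/\ feasible_basis z p (init_idx l),
      basic_sol z (init_idx l) p = const_mx (enorm p / (l%:R * eps))
    & dual_vec z (init_idx l) = (eps * enorm p)^-1 *: p].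
Proof.
have sI := size_init_idx l_gt0.
have I_unit : basis_mx z (init_idx l) \in unitmx.
  by apply/(basis_mx_unitP _ sI); split; [exact: init_idx_uniq | exact: init_idx_lin_indep].
have l_pos : 0 < l%:R :> R by rewrite ltr0n.
have xE : basic_sol z (init_idx l) p = const_mx (enorm p / (l%:R * eps)).
  apply: basic_sol_unique => //; apply: trmx_inj; rewrite basis_mx_mulE trmxK.
  under eq_bigr do rewrite mxE.
  rewrite -scaler_sumr -(big_basis _ sI) sum_init_idx scalerA.
  by rewrite [_ * _](_ : _ = 1) ?scale1r //; field; rewrite !gt_eqF.
split=> //.
  by split=> // i; rewrite xE mxE divr_ge0 ?mulr_ge0 ?ltW.
apply: dual_vec_unique => // i.
by rewrite dotZl dot_init_idx ?mulVf ?mem_nth ?sI // mulf_neq0 ?gt_eqF.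
Qed.

End Initialization.

Section PrimalFeasibility.
Variables (R : realType) (l : nat) (C1 C2 : set 'rV[R]_l) (p1 p2 : 'rV[R]_l).
Local Notation p := (p2 - p1).

Lemma gd_feasible_of_ray (beta : R) (z1 z2 : 'rV[R]_l) :
  0 < beta -> C1 z1 -> C2 z2 -> z1 - z2 + p = beta *: p ->
  gd_feasible C1 C2 p1 p2 beta^-1 z1 z2.
Proof.
move=> beta_gt0 z1C z2C ray; split; first by rewrite invr_ge0 ltW.
split=> //; split=> //.
have -> : z1 = beta *: p - p + z2 by rewrite -ray addrK subrK.
by apply/rowP => i; rewrite !mxE; field; rewrite gt_eqF.
Qed.

Lemma convex_comb_feasible (s : seq int) (nu : int -> R) (zz1 zz2 : int -> 'rV[R]_l) :
  convex.convex_set C1 -> convex.convex_set C2 ->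
  (forall m, m \in s -> 0 <= nu m) -> (forall m, m \in s -> C1 (zz1 m) /\ C2 (zz2 m)) ->
  \sum_(m <- s) nu m *: (zz1 m - zz2 m + p) = p -> 0 < \sum_(m <- s) nu m ->
  let beta := (\sum_(m <- s) nu m)^-1 in
  rip_feasible (mdiff C1 C2 p) p beta (\sum_(m <- s) (beta * nu m) *: (zz1 m - zz2 m + p))
  /\ gd_feasible C1 C2 p1 p2 beta^-1
       (\sum_(m <- s) (beta * nu m) *: zz1 m) (\sum_(m <- s) (beta * nu m) *: zz2 m).
Proof.
move=> C1_convex C2_convex nu_ge0 zzC sum_nu_z sum_nu_gt0 beta.
have beta_gt0 : 0 < beta by rewrite invr_gt0.
have w_ge0 m : m \in s -> 0 <= beta * nu m by move=> ms; rewrite mulr_ge0 ?nu_ge0 ?ltW.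
have sum_w : \sum_(m <- s) beta * nu m = 1 by rewrite -mulr_sumr mulVf ?gt_eqF.
have zcE : \sum_(m <- s) (beta * nu m) *: (zz1 m - zz2 m + p) = beta *: p.
  by rewrite -[in RHS]sum_nu_z scaler_sumr; apply: eq_bigr => m _; rewrite scalerA.
set zc1 := \sum_(m <- s) (beta * nu m) *: zz1 m.
set zc2 := \sum_(m <- s) (beta * nu m) *: zz2 m.
have zc_split : \sum_(m <- s) (beta * nu m) *: (zz1 m - zz2 m + p) = zc1 - zc2 + p.
  rewrite -[p in RHS]scale1r -sum_w scaler_suml -sumrB -big_split /=.
  by apply: eq_bigr => m _; rewrite scalerDr scalerBr.
have zc1C := convex_set_sum C1_convex w_ge0 sum_w (fun m ms => (zzC m ms).1).
have zc2C := convex_set_sum C2_convex w_ge0 sum_w (fun m ms => (zzC m ms).2).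
split; first by split=> //; rewrite zc_split; exists zc1, zc2.
by apply: gd_feasible_of_ray; rewrite // -zc_split.
Qed.

End PrimalFeasibility.

Section GrowthDistanceRun.
Variables (R : realType) (l : nat) (C1 C2 : set 'rV[R]_l) (p1 p2 : 'rV[R]_l).
Variables (rbar eps K : R) (pperp zz1 zz2 : int -> 'rV[R]_l).
Variables (lam : nat -> 'rV[R]_l) (Mi B : nat -> seq int) (nu : nat -> int -> R) (k : nat).
Hypothesis run : gd_run C1 C2 p1 p2 rbar eps K pperp zz1 zz2 lam Mi B nu k.
Local Notation p := (p2 - p1).
Hypothesis p_neq0 : p != 0.
Local Notation z := (fun m => zz1 m - zz2 m + p).

Let k_in_range : (0 < k)%N -> (0 < k <= k)%N.
Proof. by move=> ->; rewrite leqnn. Qed.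

Lemma gd_run_init :
  [/\ feasible_basis z p (init_idx l),
      basic_sol z (init_idx l) p = const_mx (enorm p / (l%:R * eps))
    & dual_vec z (init_idx l) = (eps * enorm p)^-1 *: p].
Proof.
case: run => [[[eps_gt0 K_gt0] [pperp_orth pperp_indep]] [z_perp z_0] _ _ _].
apply: init_idx_feasible pperp_indep z_perp z_0 => // m m_perp.
by have [] := pperp_orth m m_perp.
Qed.

Lemma gd_run_feasible j : (j <= k)%N -> feasible_basis z p (B j).
Proof.
case: run => _ _ _ [_ B0 _ _] step; elim: j => [_|j IH jk].
  by rewrite B0; case: gd_run_init.
have [_ _ simplex _ _] := step j.+1 jk.
by apply: simplex_run_feasible simplex; apply/IH/ltnW.
Qed.

Lemma gd_run_support j : (j <= k)%N -> forall m, m \in Mi j -> C1 (zz1 m) /\ C2 (zz2 m).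
Proof.
case: run => _ _ init_mem [Mi0 _ _ _] step; elim: j => [_ m|j IH jk m].
  by rewrite Mi0 => /init_mem [_].
have [[zz1C _] [zz2C _] _ [_ [_ Mi_sub]] _] := step j.+1 jk.
by move/Mi_sub; rewrite mem_rcons inE => /orP [/eqP -> //|]; apply/IH/ltnW.
Qed.

Lemma gd_run_basis_support m : m \in B k -> C1 (zz1 m) /\ C2 (zz2 m).
Proof.
move=> mB; apply: (gd_run_support (leqnn k)).
case: run mB => _ _ _ [Mi0 B0 _ _] step.
have [->|k_gt0] := posnP k; first by rewrite Mi0 B0.
by have [_ _ _ [_ [B_sub _]] _] := step k (k_in_range k_gt0); apply: B_sub.
Qed.

Lemma gd_run_nu (i : 'I_l) : nu k (nth 0 (B k) i) = basic_sol z (B k) p i 0.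
Proof.
case: run => _ _ _ [_ B0 nu0 _] step; have [->|k_gt0] := posnP k.
  have [[sI _ _] xE _] := gd_run_init.
  by rewrite B0 nu0 mem_nth ?sI // xE mxE.
by have [_ _ _ [[nuE _] _] _] := step k (k_in_range k_gt0).
Qed.

Lemma gd_run_lam : exists2 c, 0 < c & lam k = c *: dual_vec z (B k).
Proof.
case: run => [[[eps_gt0 _] _] _ _ [_ B0 _ lam0] step]; have [->|k_gt0] := posnP k.
  have [_ _ dualE] := gd_run_init; rewrite B0 dualE lam0.
  exists ((infnorm p)^-1 * (eps * enorm p)).
    by rewrite mulr_gt0 ?invr_gt0 ?infnorm_gt0 ?mulr_gt0 ?enorm_gt0.
  by rewrite scalerA -mulrA mulfV ?mulr1 // mulf_neq0 ?gt_eqF ?enorm_gt0.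
have [_ _ _ _ ->] := step k (k_in_range k_gt0).
exists (infnorm (dual_vec z (B k)))^-1 => //.
by rewrite invr_gt0 infnorm_gt0 // (dual_vec_neq0 p_neq0 (gd_run_feasible (leqnn k))).
Qed.

End GrowthDistanceRun.

Unset Implicit Arguments.

Theorem theorem1 (R : realType) (l : nat) (C1 C2 : set 'rV[R]_l)
    (p1 p2 : 'rV[R]_l) (r1 r2 eps K : R) (pperp : int -> 'rV[R]_l)
    (zz1 zz2 : int -> 'rV[R]_l) (lam : nat -> 'rV[R]_l)
    (Mi B : nat -> seq int) (nu : nat -> int -> R) (k : nat) :
  PC_set C1 ->
  compact C2 -> convex.convex_set C2 -> C2 !=set0 ->
  interior C1 p1 -> C2 p2 -> p1 != p2 ->
  is_inradius C1 p1 r1 -> is_inradius C2 p2 r2 -> 0 < r1 + r2 ->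
  gd_run C1 C2 p1 p2 (r1 + r2) eps K pperp zz1 zz2 lam Mi B nu k ->
  let p := p2 - p1 in
  let C := mdiff C1 C2 p in
  let z := fun m => zz1 m - zz2 m + p in
  let beta := (\sum_(m <- B k) nu k m)^-1 in
  let alpha := beta^-1 in
  let zc := \sum_(m <- B k) (beta * nu k m) *: z m in
  let zc1 := \sum_(m <- B k) (beta * nu k m) *: zz1 m in
  let zc2 := \sum_(m <- B k) (beta * nu k m) *: zz2 m in
  (* (i) primal feasibility *)
  [/\ rip_feasible C p beta zc /\ gd_feasible C1 C2 p1 p2 alpha zc1 zc2
        /\ 0 < beta /\ 0 < alpha,
      (* (ii) dual feasibility *)
      (forall m1 m2, m1 \in B k -> m2 \in B k ->
         dot (lam k) (z m1) = dot (lam k) (z m2)) /\ 0 < dot (lam k) p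
    & (* (iii) simplex property *)
      (forall m, m \in B k -> C (z m)) /\ lin_indep (B k) z
        /\ uniq (B k) /\ size (B k) = l].
Proof.
move=> [_ [C1_convex _]] _ C2_convex _ _ _ p12 _ _ _ run p C z beta alpha zc zc1 zc2.
have p_neq0 : p != 0 by rewrite subr_eq0 eq_sym.
have Bk_feasible := gd_run_feasible run p_neq0 (leqnn k).
have [nu_ge0 sum_nu_z sum_nu_gt0] :=
  feasible_basis_solution p_neq0 Bk_feasible (gd_run_nu run p_neq0).
have [rip gd] := convex_comb_feasible C1_convex C2_convex nu_ge0
  (gd_run_basis_support run) sum_nu_z sum_nu_gt0.
have beta_gt0 : 0 < beta by rewrite invr_gt0.
have [c c_gt0 lamE] := gd_run_lam run p_neq0.
have [Bk_size /(basis_mx_unitP _ Bk_size) [Bk_uniq Bk_indep] _] := Bk_feasible.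
split.
- by do !split => //; rewrite invr_gt0.
- exact (feasible_basis_dual p_neq0 Bk_feasible c_gt0 lamE).
- split=> // m /(gd_run_basis_support run) [zz1C zz2C].
  by exists (zz1 m), (zz2 m).
Qed.
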